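(* For every positive integer $m$ and every nonempty proper subset $S\subseteq[n]$ there is a two-outcome projective measurement $\{\Pi_S,\overline{\Pi}_S\}$ on $2m$ copies of an $n$-qubit system with the following property. Let $C\subseteq[n]$ be nonempty proper and let $\ket{\psi}=\ket{a}_C\otimes\ket{b}_{\overline{C}}$, where $\ket{a}_C$ and $\ket{b}_{\overline{C}}$ are each $\epsilon$-far from every multipartite product state. If $\ket{\psi}^{\otimes 2m}$ is measured with $\{\Pi_S,\overline{\Pi}_S\}$, then the outcome $\Pi_S$ (''accept'') occurs with probability $1$ if $S=C$ or $S=\overline{C}$, and with probability at most $\exp(-\epsilon^2 m/2)$ if $S\ne C,\overline{C}$.
   Context: A state on a set $Q$ of qubits is multipartite product if it equals $\ket{a'}_D\otimes\ket{b'}_{Q\setminus D}$ for some nonempty proper $D\subsetneq Q$; a pure state $\ket{\phi}$ is $\epsilon$-far from a set $\mathcal{P}$ if $|\langle\phi|\chi\rangle|^2\le1-\epsilon^2$ for all $\ket{\chi}\in\mathcal{P}$. $\overline{C}=[n]\setminus C$. *)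

From mathcomp Require Import all_boot all_algebra complex.
From mathcomp Require Import reals.
From mathcomp Require Import sequences exp.
Import GRing.Theory Num.Theory.
Set Implicit Arguments. Unset Strict Implicit. Unset Printing Implicit Defensive.
Local Open Scope ring_scope.

(* Computational basis configurations of an n-qubit register. *)
Definition conf (n : nat) := {ffun 'I_n -> bool}.

Definition restr n (D : {set 'I_n}) (x : conf n) : conf n :=
  [ffun i => (i \in D) && x i].

(* A vector on the qubits of Q is encoded as a function on full configurations
   that vanishes on configurations which are nonzero outside Q. *)
Definition supported (R : realType) n (Q : {set 'I_n}) (v : conf n -> R[i]) :=
  forall x, restr Q x != x -> v x = 0.

Definition dotp (R : realType) n (u v : conf n -> R[i]) : R[i] :=
  \sum_(x : conf n) (u x)^* * v x.

Definition pure_state (R : realType) n (Q : {set 'I_n}) (v : conf n -> R[i]) :=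
  supported Q v /\ dotp v v = 1.

(* Tensor product |u>_D (x) |w>_E of vectors on disjoint sets D, E. *)
Definition tens (R : realType) n (D E : {set 'I_n}) (u w : conf n -> R[i])
  : conf n -> R[i] :=
  fun x => if restr (D :|: E) x == x then u (restr D x) * w (restr E x) else 0.

Definition multipartite_product (R : realType) n (Q : {set 'I_n})
  (chi : conf n -> R[i]) :=
  pure_state Q chi /\
  exists D : {set 'I_n}, [/\ D != set0, D \proper Q &
    exists a' b', [/\ pure_state D a', pure_state (Q :\: D) b' &
      chi = tens D (Q :\: D) a' b']].

Definition far_from_mp (R : realType) n (Q : {set 'I_n}) (eps : R)
  (phi : conf n -> R[i]) :=
  forall chi, multipartite_product Q chi ->
    `|dotp phi chi| ^+ 2 <= ((1 - eps ^+ 2)%:C)%C.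

Definition copies (n k : nat) := {ffun 'I_k -> conf n}.

Definition tensor_power (R : realType) n k (psi : conf n -> R[i])
  : copies n k -> R[i] := fun y => \prod_(j < k) psi (y j).

Definition operator (R : realType) n k := copies n k -> copies n k -> R[i].

(* Orthogonal projector: Hermitian and idempotent.  Its complement 1 - P is
   then also a projector, so {P, 1 - P} is a two-outcome projective measurement. *)
Definition projector (R : realType) n k (P : operator R n k) :=
  (forall y z, P y z = (P z y)^*) /\
  (forall y w, \sum_(z : copies n k) P y z * P z w = P y w).

Definition outcome_prob (R : realType) n k (P : operator R n k)
  (Phi : copies n k -> R[i]) : R[i] :=
  \sum_(y : copies n k) \sum_(z : copies n k) (Phi y)^* * P y z * Phi z.

From mathcomp Require Import all_boot all_algebra complex.
From mathcomp Require Import reals.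
From mathcomp Require Import sequences exp.
From mathcomp Require Import all_order ring.
Import Order.TTheory GRing.Theory Num.Theory.
Set Implicit Arguments. Unset Strict Implicit. Unset Printing Implicit Defensive.
Local Open Scope ring_scope.

(* Pair copy j with copy m + j and run on each pair the swap test of the
   qubits in S: Pi_S is the product of the projectors (1 + SWAP_S) / 2.  On psi (x) psi a swap test accepts with probability
   (1 + p) / 2, where p = Tr rho_S^2 is the purity of the reduced state of psi
   on S, so Pi_S accepts psi^(2m) with probability ((1 + p) / 2)^m.  For
   psi = a (x) b the purity factorises over the two parts C and ~C; it is 1 if
   S = C or S = ~C.  Otherwise S cuts C or ~C into two nonempty pieces, and the
   purity of a bipartite pure state is at most its largest squared overlap with
   a product state, hence at most 1 - eps^2 by farness; finally
   (1 - eps^2 / 2)^m <= exp (- eps^2 m / 2).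
   The overlap bound avoids spectral theory: write the state as a matrix A,
   so rho = A A^*.  By Cauchy-Schwarz, p^2 <= sum_i |A^* rho e_i|^2 while
   p = sum_i |rho e_i|^2, so some column i has p |rho e_i|^2 <= |A^* rho e_i|^2;
   the normalisations of rho e_i and of the conjugate of A^* rho e_i form a
   product state whose squared overlap with the state is at least p. *)

Section CauchySchwarz.
Variable C : numClosedFieldType.

Lemma psum_normsq_eq0 (I : finType) (x : I -> C) :
  \sum_i `|x i| ^+ 2 = 0 -> forall i, x i = 0.
Proof.
move=> /eqP; rewrite psumr_eq0 => [/allP x0 i|i _]; last exact: exprn_ge0.
by apply/eqP; rewrite -normr_eq0 -sqrf_eq0; exact: x0 i (mem_index_enum i).
Qed.

Lemma Cauchy_Schwarz (I : finType) (x y : I -> C) :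
  `|\sum_i x i * y i| ^+ 2 <= (\sum_i `|x i| ^+ 2) * (\sum_i `|y i| ^+ 2).
Proof.
set c := \sum_i _; set A := \sum_i `|x i| ^+ 2; set B := \sum_i `|y i| ^+ 2.
have [B0|B_neq0] := eqVneq B 0.
  have y0 := psum_normsq_eq0 B0.
  by rewrite /c big1 ?normr0 ?expr0n ?B0 ?mulr0 // => i _; rewrite y0 mulr0.
have B_gt0 : 0 < B by rewrite lt0r B_neq0 sumr_ge0 // => i _; exact: exprn_ge0.
have Bc : B^* = B by apply/CrealP; exact/ger0_real/ltW.
have : 0 <= \sum_i `|B * x i - c * (y i)^*| ^+ 2.
  by apply: sumr_ge0 => i _; exact: exprn_ge0.
suff -> : \sum_i `|B * x i - c * (y i)^*| ^+ 2 = B * (B * A - `|c| ^+ 2).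
  by rewrite pmulr_rge0 // subr_ge0 mulrC.
transitivity (\sum_i (B * B * `|x i| ^+ 2 - B * c^* * (x i * y i)
                      - B * c * (x i * y i)^* + `|c| ^+ 2 * `|y i| ^+ 2)).
  by apply: eq_bigr => i _; rewrite !normCK rmorphB !rmorphM /= Bc conjCK; ring.
rewrite !big_split /= !sumrN -!mulr_sumr -/A -/B -(rmorph_sum Num.conj) -/c normCK.
ring.
Qed.

Lemma sum_normsq_div_sqrt (I : finType) (x : I -> C) :
  0 < \sum_i `|x i| ^+ 2 -> \sum_i `|x i / sqrtC (\sum_i `|x i| ^+ 2)| ^+ 2 = 1.
Proof.
set w := \sum_i _ => w_gt0.
have norm_sqrt : `|sqrtC w| = sqrtC w by rewrite ger0_norm // sqrtC_ge0 ltW.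
under eq_bigr do rewrite normf_div norm_sqrt expr_div_n sqrtCK.
by rewrite -mulr_suml divff // gt_eqF.
Qed.

End CauchySchwarz.

Section Purity.
Variables (C : numClosedFieldType) (I J : finType) (A : I -> J -> C).

Definition rho s s' := \sum_t A s t * (A s' t)^*.
Definition purity := \sum_s \sum_s' `|rho s s'| ^+ 2.
Definition col_weight i := \sum_s `|rho s i| ^+ 2.
Definition back_col i t := \sum_s (A s t)^* * rho s i.
Definition back_weight i := \sum_t `|back_col i t| ^+ 2.

Lemma rho_conj s s' : (rho s s')^* = rho s' s.
Proof.
rewrite /rho rmorph_sum; apply: eq_bigr => t _.
by rewrite rmorphM /= conjCK mulrC.
Qed.

Lemma purityE : purity =
  \sum_s \sum_t \sum_s' \sum_t' (A s t)^* * (A s' t')^* * A s' t * A s t'.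
Proof.
apply: eq_bigr => s _; rewrite [RHS]exchange_big; apply: eq_bigr => s' _.
rewrite normCK mulrC rmorph_sum mulr_suml; apply: eq_bigr => t _.
rewrite mulr_sumr; apply: eq_bigr => t' _.
by rewrite rmorphM /= conjCK; ring.
Qed.

Lemma col_weight_ge0 i : 0 <= col_weight i.
Proof. by apply: sumr_ge0 => s _; exact: exprn_ge0. Qed.

Lemma back_weight_ge0 i : 0 <= back_weight i.
Proof. by apply: sumr_ge0 => t _; exact: exprn_ge0. Qed.

Lemma purity_col_weight : purity = \sum_i col_weight i.
Proof. exact: exchange_big. Qed.

Lemma purity_ge0 : 0 <= purity.
Proof. by rewrite purity_col_weight; apply: sumr_ge0 => i _; exact: col_weight_ge0. Qed.

Lemma purity_back_col : purity = \sum_i \sum_t A i t * back_col i t.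
Proof.
rewrite purity_col_weight; apply: eq_bigr => i _.
under [RHS]eq_bigr => t _ do rewrite mulr_sumr.
rewrite [RHS]exchange_big; apply: eq_bigr => s _.
rewrite normCK rho_conj [rho i s]/rho mulr_sumr; apply: eq_bigr => t _.
by ring.
Qed.

Lemma back_weight_eq0 i : col_weight i = 0 -> back_weight i = 0.
Proof.
move=> /psum_normsq_eq0 rho0; rewrite /back_weight big1 // => t _.
by rewrite /back_col big1 ?normr0 ?expr0n // => s _; rewrite rho0 mulr0.
Qed.

Hypothesis A_normed : \sum_s \sum_t `|A s t| ^+ 2 = 1.

Lemma trace_rho : \sum_s rho s s = 1.
Proof.
by rewrite -A_normed; apply: eq_bigr => s _; apply: eq_bigr => t _; rewrite normCK.
Qed.

Lemma purity_sqr_le : purity ^+ 2 <= \sum_i back_weight i.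
Proof.
have := Cauchy_Schwarz (fun p : I * J => A p.1 p.2) (fun p => back_col p.1 p.2).
rewrite -(pair_bigA _ (fun i t => A i t * back_col i t)).
rewrite -(pair_bigA _ (fun i t => `|A i t| ^+ 2)).
rewrite -(pair_bigA _ (fun i t => `|back_col i t| ^+ 2)) /=.
by rewrite -purity_back_col A_normed mul1r ger0_norm //; exact: purity_ge0.
Qed.

Lemma exists_col_weight_gt0 : exists i, 0 < col_weight i.
Proof.
have [/existsP //|/existsPn w_le0] := boolP [exists i, 0 < col_weight i].
have w0 i : col_weight i = 0.
  by apply/eqP; move: (w_le0 i); rewrite lt0r col_weight_ge0 andbT negbK.
have := trace_rho; rewrite big1 => [/eqP|s _]; first by rewrite eq_sym oner_eq0.
exact: psum_normsq_eq0 (w0 s) s.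
Qed.

(* Summing [back_weight i < purity * col_weight i] over i would contradict
   [purity_sqr_le], as [purity = \sum_i col_weight i]. *)
Lemma exists_heavy_col :
  exists i, 0 < col_weight i /\ purity * col_weight i <= back_weight i.
Proof.
have [/existsP [i /andP[]]|/existsPn light] :=
  boolP [exists i, (0 < col_weight i) && (purity * col_weight i <= back_weight i)].
  by exists i.
have [i0 w_gt0] := exists_col_weight_gt0.
have light_lt i : 0 < col_weight i -> back_weight i < purity * col_weight i.
  move=> w_gt0'; move: (light i); rewrite w_gt0' /=.
  by rewrite real_ltNge ?ger0_real ?mulr_ge0 ?purity_ge0 ?col_weight_ge0
    ?back_weight_ge0.
have le_light i : back_weight i <= purity * col_weight i.
  have [w0|w_neq0] := eqVneq (col_weight i) 0.
    by rewrite back_weight_eq0 // w0 mulr0.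
  by apply/ltW/light_lt; rewrite lt0r w_neq0 col_weight_ge0.
suff : \sum_i back_weight i < purity ^+ 2.
  by move/lt_le_trans/(_ purity_sqr_le); rewrite ltxx.
rewrite expr2 {2}purity_col_weight mulr_sumr.
rewrite [X in X < _](bigD1 i0) // [X in _ < X](bigD1 i0) //=.
exact: ltr_leD (light_lt i0 w_gt0) (ler_sum _ (fun i _ => le_light i)).
Qed.

(* The product state is built from a heavy column [i]; its squared overlap with
   [A] is [back_weight i / col_weight i]. *)
Lemma purity_le_product_overlap : exists (X : I -> C) (Y : J -> C),
  [/\ \sum_s `|X s| ^+ 2 = 1, \sum_t `|Y t| ^+ 2 = 1,
      (forall s, (forall t, A s t = 0) -> X s = 0),
      (forall t, (forall s, A s t = 0) -> Y t = 0) &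
      purity <= `|\sum_s \sum_t (A s t)^* * X s * Y t| ^+ 2].
Proof.
have [i [w_gt0 heavy]] := exists_heavy_col.
have p_gt0 : 0 < purity.
  apply: lt_le_trans w_gt0 _; rewrite purity_col_weight (bigD1 i) //= lerDl.
  by apply: sumr_ge0 => j _; exact: col_weight_ge0.
have b_gt0 : 0 < back_weight i by apply: lt_le_trans heavy; exact: mulr_gt0.
set al := sqrtC (col_weight i); set be := sqrtC (back_weight i).
have al_neq0 : al != 0 by rewrite gt_eqF ?sqrtC_gt0.
have be_neq0 : be != 0 by rewrite gt_eqF ?sqrtC_gt0.
exists (fun s => rho s i / al), (fun t => (back_col i t)^* / be); split.
- exact: sum_normsq_div_sqrt.
- under eq_bigr do rewrite normf_div norm_conjC -normf_div.
  exact: sum_normsq_div_sqrt.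
- by move=> s A0; rewrite /rho big1 ?mul0r // => t _; rewrite A0 mul0r.
- move=> t A0; rewrite /back_col big1 ?rmorph0 ?mul0r // => s _.
  by rewrite A0 rmorph0 mul0r.
have -> : \sum_s \sum_t (A s t)^* * (rho s i / al) * ((back_col i t)^* / be)
    = back_weight i / (al * be).
  rewrite exchange_big /back_weight mulr_suml; apply: eq_bigr => t _.
  rewrite normCK /back_col mulr_suml mulr_suml; apply: eq_bigr => s _.
  by field; rewrite al_neq0 be_neq0.
rewrite ger0_norm ?divr_ge0 ?mulr_ge0 ?sqrtC_ge0 ?col_weight_ge0 ?back_weight_ge0 //.
have -> : (back_weight i / (al * be)) ^+ 2 = back_weight i / col_weight i.
  rewrite expr_div_n exprMn !sqrtCK; field.
  by rewrite !gt_eqF.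
by rewrite ler_pdivlMr.
Qed.

Lemma purity_le1 : purity <= 1.
Proof.
have [X [Y [X1 Y1 _ _ /le_trans]]] := purity_le_product_overlap; apply.
have := Cauchy_Schwarz (fun p : I * J => (A p.1 p.2)^*) (fun p => X p.1 * Y p.2).
rewrite -(pair_bigA _ (fun s t => (A s t)^* * (X s * Y t))).
rewrite -(pair_bigA _ (fun s t => `|(A s t)^*| ^+ 2)).
rewrite -(pair_bigA _ (fun s t => `|X s * Y t| ^+ 2)) /=.
have -> : \sum_s \sum_t `|(A s t)^*| ^+ 2 = 1.
  by rewrite -A_normed; apply: eq_bigr => s _; apply: eq_bigr => t _; rewrite norm_conjC.
have -> : \sum_s \sum_t `|X s * Y t| ^+ 2 = 1.
  rewrite -[1]mulr1 -{1}X1 -Y1 big_distrlr /=.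
  by apply: eq_bigr => s _; apply: eq_bigr => t _; rewrite normrM exprMn.
by under eq_bigr do under eq_bigr do rewrite mulrA; rewrite mulr1.
Qed.

End Purity.

Lemma big_supp (T : finType) (V : nmodType) (P : pred T) (F : T -> V) :
  (forall x, ~~ P x -> F x = 0) -> \sum_x F x = \sum_(x | P x) F x.
Proof.
move=> F0; rewrite [RHS]big_mkcond; apply: eq_bigr => x _.
by case: ifPn => // /F0.
Qed.

Lemma dotp_normsq (R : realType) n (v : conf n -> R[i]) :
  dotp v v = \sum_x `|v x| ^+ 2.
Proof. by apply: eq_bigr => x _; rewrite normCK mulrC. Qed.

Section Configurations.
Variable n : nat.
Implicit Types (x y u v s t : conf n) (D G Q S : {set 'I_n}).

Definition supp Q x := restr Q x == x.
Definition conf_union x y : conf n := [ffun i => x i || y i].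
Definition splice S u v : conf n := [ffun i => if i \in S then v i else u i].

Lemma suppP Q x : reflect (forall i, i \notin Q -> x i = false) (supp Q x).
Proof.
apply: (iffP eqP) => [<- i /negbTE iQ|x0]; first by rewrite ffunE iQ.
by apply/ffunP => i; rewrite ffunE; case: (boolP (i \in Q)) => //= /x0 ->.
Qed.

Lemma supp_restr Q x : supp Q (restr Q x).
Proof. by apply/suppP => i /negbTE iQ; rewrite ffunE iQ. Qed.

Lemma restrT x : restr [set: 'I_n] x = x.
Proof. by apply/ffunP => i; rewrite ffunE in_setT. Qed.

Lemma supp_setUCr Q x : supp (Q :|: ~: Q) x.
Proof. by rewrite /supp setUCr restrT. Qed.

Lemma restr_union D G s t : [disjoint D & G] -> supp D s -> supp G t ->
  restr D (conf_union s t) = s /\ restr G (conf_union s t) = t.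
Proof.
move=> DG /suppP s0 /suppP t0; split; apply/ffunP => i; rewrite !ffunE.
- have [iD|/s0 ->] := boolP (i \in D); last by [].
  by rewrite t0 ?orbF // (disjointFr DG iD).
- have [iG|/t0 ->] := boolP (i \in G); last by [].
  by rewrite s0 // (disjointFl DG iG).
Qed.

Lemma supp_union D G s t :
  supp D s -> supp G t -> supp (D :|: G) (conf_union s t).
Proof.
move=> /suppP s0 /suppP t0; apply/suppP => i; rewrite in_setU negb_or.
by case/andP => /s0 si /t0 ti; rewrite ffunE si ti.
Qed.

Lemma union_restr D G x :
  supp (D :|: G) x -> conf_union (restr D x) (restr G x) = x.
Proof.
move=> /suppP x0; apply/ffunP => i; rewrite !ffunE.
have := x0 i; rewrite in_setU.
by case: (i \in D); case: (i \in G); case: (x i) => //= ->.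
Qed.

Lemma supp_splice Q S u v : supp Q u -> supp Q v -> supp Q (splice S u v).
Proof.
move=> /suppP u0 /suppP v0; apply/suppP => i iQ.
by rewrite ffunE; case: ifP => _; [exact: v0 | exact: u0].
Qed.

Lemma splice_union S x y x' y' : splice S (conf_union x y) (conf_union x' y') =
  conf_union (splice S x x') (splice S y y').
Proof. by apply/ffunP => i; rewrite !ffunE; case: ifP. Qed.

Lemma spliceK S u v : splice S (splice S u v) (splice S v u) = u.
Proof. by apply/ffunP => i; rewrite !ffunE; case: (i \in S). Qed.

Lemma splice_sub Q S u v :
  Q \subset S -> supp Q u -> supp Q v -> splice S u v = v.
Proof.
move=> /subsetP QS /suppP u0 /suppP v0; apply/ffunP => i; rewrite ffunE.
have [//|iS] := ifPn; have iQ : i \notin Q by apply: contra iS; exact: QS.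
by rewrite u0 ?v0.
Qed.

Lemma splice_disjoint Q S u v :
  [disjoint Q & S] -> supp Q u -> supp Q v -> splice S u v = u.
Proof.
move=> QS /suppP u0 /suppP v0; apply/ffunP => i; rewrite ffunE.
have [iS|//] := ifPn; have iQ : i \notin Q by rewrite (disjointFl QS iS).
by rewrite u0 ?v0.
Qed.

Lemma sum_supp_union (V : nmodType) D G (F : conf n -> V) : [disjoint D & G] ->
  \sum_(x | supp (D :|: G) x) F x =
  \sum_(s | supp D s) \sum_(t | supp G t) F (conf_union s t).
Proof.
move=> DG.
rewrite (reindex_onto (fun p : conf n * conf n => conf_union p.1 p.2)
           (fun x => (restr D x, restr G x))); last by move=> x /union_restr.
rewrite pair_big /=; apply: eq_bigl => [[s t]] /=.
apply/andP/andP => [[_ /eqP [<- <-]]|[sD tG]]; first by rewrite !supp_restr.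
by have [-> ->] := restr_union DG sD tG; rewrite supp_union.
Qed.

Lemma sum_setC_union (V : nmodType) Q (F : conf n -> V) :
  \sum_x F x = \sum_(s | supp Q s) \sum_(t | supp (~: Q) t) F (conf_union s t).
Proof.
rewrite -sum_supp_union ?disjoints_subset ?setCK //.
by apply: eq_bigl => x; rewrite supp_setUCr.
Qed.

Lemma tens_setCE (R : realType) Q (a b : conf n -> R[i]) x :
  tens Q (~: Q) a b x = a (restr Q x) * b (restr (~: Q) x).
Proof. by have := supp_setUCr Q x; rewrite /tens /supp => ->. Qed.

End Configurations.

Section PurityOn.
Variables (R : realType) (n : nat).
Implicit Types (Q S : {set 'I_n}) (phi a b : conf n -> R[i]).

(* <phi (x) phi| SWAP_S |phi (x) phi>, i.e. the purity of the reduced state of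
   [phi] on [S]: [splice S u v] is [u] with its [S]-part taken from [v]. *)
Definition purity_on S phi := \sum_u \sum_v
  (phi u)^* * (phi v)^* * phi (splice S u v) * phi (splice S v u).

Lemma purity_on_trivial Q S phi : supported Q phi ->
  Q \subset S \/ [disjoint Q & S] -> purity_on S phi = dotp phi phi ^+ 2.
Proof.
move=> phiQ QS; rewrite expr2 /dotp big_distrlr /=; apply: eq_bigr => u _.
apply: eq_bigr => v _.
have [uQ|/(phiQ _)->] := boolP (supp Q u); last by rewrite !(rmorph0, mul0r).
have [vQ|/(phiQ _)->] := boolP (supp Q v); last by rewrite !(rmorph0, mul0r, mulr0).
case: QS => QS.
- by rewrite (splice_sub QS uQ vQ) (splice_sub QS vQ uQ); ring.
- by rewrite (splice_disjoint QS uQ vQ) (splice_disjoint QS vQ uQ); ring.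
Qed.

Lemma purity_on_tens Q S a b : supported Q a -> supported (~: Q) b ->
  purity_on S (tens Q (~: Q) a b) = purity_on S a * purity_on S b.
Proof.
move=> aQ bQ; have QQ : [disjoint Q & ~: Q] by rewrite disjoints_subset setCK.
rewrite /purity_on (sum_setC_union Q).
under eq_bigr => x _ do under eq_bigr => y _ do rewrite (sum_setC_union Q).
rewrite (big_supp (P := supp Q)); last first.
  by move=> x /(aQ _) a0; apply: big1 => x' _; rewrite a0 rmorph0 !mul0r.
rewrite big_distrl /=; apply: eq_bigr => x xQ.
rewrite (big_supp (P := supp Q)); last first.
  by move=> x' /(aQ _) a0; rewrite a0 !(rmorph0, mul0r, mulr0).
rewrite big_distrl /= exchange_big; apply: eq_bigr => x' x'Q.
rewrite (big_supp (P := supp (~: Q))); last first.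
  by move=> y /(bQ _) b0; apply: big1 => y' _; rewrite b0 !(rmorph0, mul0r, mulr0).
rewrite big_distrr /=; apply: eq_bigr => y yQ.
rewrite (big_supp (P := supp (~: Q))); last first.
  by move=> y' /(bQ _) b0; rewrite b0 !(rmorph0, mul0r, mulr0).
rewrite big_distrr /=; apply: eq_bigr => y' y'Q.
rewrite !splice_union !tens_setCE.
have [-> ->] := restr_union QQ xQ yQ.
have [-> ->] := restr_union QQ x'Q y'Q.
have [-> ->] := restr_union QQ (supp_splice S xQ x'Q) (supp_splice S yQ y'Q).
have [-> ->] := restr_union QQ (supp_splice S x'Q xQ) (supp_splice S y'Q yQ).
by rewrite !rmorphM; ring.
Qed.

End PurityOn.

Section Bipartition.
Variables (R : realType) (n : nat) (Q S : {set 'I_n}) (phi : conf n -> R[i]).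
Hypothesis phiQ : supported Q phi.
Let D := Q :&: S.
(* Not [Q :\: S]: this is the shape of the complement in [multipartite_product]. *)
Let G := Q :\: D.

Lemma disjoint_bipart : [disjoint D & G].
Proof. by rewrite /G disjoints_subset setCD subsetUr. Qed.

Lemma setU_bipart : D :|: G = Q.
Proof. by apply/setP => i; rewrite !inE; case: (i \in Q); case: (i \in S). Qed.

Lemma sum_bipart (V : nmodType) (F : conf n -> V) : (forall x, ~~ supp Q x -> F x = 0) ->
  \sum_x F x = \sum_s \sum_t
    (if supp D s && supp G t then F (conf_union s t) else 0).
Proof.
move=> F0; rewrite (big_supp F0) -{1}setU_bipart sum_supp_union ?disjoint_bipart //.
rewrite big_mkcond; apply: eq_bigr => s _; case: ifP => sD /=; last by rewrite big1.
by rewrite big_mkcond; apply: eq_bigr => t _; case: ifP.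
Qed.

Definition bipart_coef s t :=
  if supp D s && supp G t then phi (conf_union s t) else 0.

Lemma bipart_coef0 s t : ~~ (supp D s && supp G t) -> bipart_coef s t = 0.
Proof. by rewrite /bipart_coef => /negbTE ->. Qed.

Lemma splice_bipart s t s' t' : supp D s -> supp G t -> supp D s' -> supp G t' ->
  splice S (conf_union s t) (conf_union s' t') = conf_union s' t.
Proof.
move=> /suppP s0 /suppP t0 /suppP s'0 /suppP t'0; apply/ffunP => i; rewrite !ffunE.
have [iS|iS] := ifPn.
- have iG : i \notin G by rewrite !inE iS; case: (i \in Q).
  by rewrite t0 ?t'0.
- have iD : i \notin D by rewrite !inE (negbTE iS) andbF.
  by rewrite s0 ?s'0.
Qed.

Lemma purity_on_bipart : purity_on S phi = purity bipart_coef.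
Proof.
rewrite purityE /purity_on sum_bipart; last first.
  by move=> x /phiQ ->; apply: big1 => v _; rewrite rmorph0 !mul0r.
apply: eq_bigr => s _; apply: eq_bigr => t _.
case: ifPn => [/andP[sD tG]|/bipart_coef0 st0]; last first.
  by rewrite big1 // => s' _; rewrite big1 // => t' _; rewrite st0 rmorph0 !mul0r.
rewrite sum_bipart; last by move=> x /phiQ ->; rewrite !(rmorph0, mul0r, mulr0).
apply: eq_bigr => s' _; apply: eq_bigr => t' _.
case: ifPn => [/andP[s'D t'G]|/bipart_coef0 ->];
  last by rewrite !(rmorph0, mul0r, mulr0).
rewrite /bipart_coef sD tG s'D t'G.
by rewrite (splice_bipart sD tG s'D t'G) (splice_bipart s'D t'G sD tG).
Qed.

Lemma bipart_coef_normed : dotp phi phi = 1 ->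
  \sum_s \sum_t `|bipart_coef s t| ^+ 2 = 1.
Proof.
rewrite dotp_normsq sum_bipart => [<-|x /phiQ ->]; last by rewrite normr0 expr0n.
apply: eq_bigr => s _; apply: eq_bigr => t _.
by rewrite /bipart_coef; case: (_ && _); rewrite ?normr0 ?expr0n.
Qed.

Lemma tens_bipart_union (X Y : conf n -> R[i]) s t : supp D s -> supp G t ->
  tens D G X Y (conf_union s t) = X s * Y t.
Proof.
move=> sD tG; have := supp_union sD tG; rewrite /tens /supp => ->.
by have [-> ->] := restr_union disjoint_bipart sD tG.
Qed.

Lemma dotp_bipart (X Y : conf n -> R[i]) :
  dotp phi (tens D G X Y) = \sum_s \sum_t (bipart_coef s t)^* * X s * Y t.
Proof.
rewrite /dotp sum_bipart => [|x /phiQ ->]; last by rewrite rmorph0 mul0r.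
apply: eq_bigr => s _; apply: eq_bigr => t _.
case: ifPn => [/andP[sD tG]|/bipart_coef0 ->]; last by rewrite rmorph0 !mul0r.
by rewrite tens_bipart_union // /bipart_coef sD tG mulrA.
Qed.

Lemma bipart_product_state (X Y : conf n -> R[i]) :
  D != set0 -> D \proper Q -> pure_state D X -> pure_state G Y ->
  multipartite_product Q (tens D G X Y).
Proof.
move=> D0 DQ [XD X1] [YG Y1]; split; last by exists D; split=> //; exists X, Y.
have chi0 x : ~~ supp Q x -> tens D G X Y x = 0.
  by rewrite /tens setU_bipart /supp => /negbTE ->.
split; first exact: chi0.
rewrite dotp_normsq sum_bipart => [|x /chi0 ->]; last by rewrite normr0 expr0n.
rewrite -[1]mulr1 -{1}X1 -Y1 !dotp_normsq big_distrlr /=.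
apply: eq_bigr => s _; apply: eq_bigr => t _.
case: ifPn => [/andP[sD tG]|]; first by rewrite tens_bipart_union // normrM exprMn.
by case/nandP => [/(XD _)|/(YG _)] ->; rewrite !(normr0, expr0n, mul0r, mulr0).
Qed.

Lemma purity_on_far (eps : R) : dotp phi phi = 1 -> D != set0 -> D \proper Q ->
  far_from_mp Q eps phi -> purity_on S phi <= ((1 - eps ^+ 2)%:C)%C.
Proof.
move=> phi1 D0 DQ far; rewrite purity_on_bipart.
have [X [Y [X1 Y1 X0 Y0 /le_trans]]] :=
  purity_le_product_overlap (bipart_coef_normed phi1).
apply; rewrite -dotp_bipart; apply/far/bipart_product_state => //; split.
- by move=> s sD; apply: X0 => t; apply/bipart_coef0/nandP; left.
- by rewrite dotp_normsq.
- by move=> t tG; apply: Y0 => s; apply/bipart_coef0/nandP; right.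
- by rewrite dotp_normsq.
Qed.

End Bipartition.

Lemma proper_trace_cases (T : finType) (C S : {set T}) :
  S != set0 -> S != [set: T] -> S != C -> S != ~: C ->
  (C :&: S != set0) && (C :&: S \proper C) ||
  (~: C :&: S != set0) && (~: C :&: S \proper ~: C).
Proof.
move=> S0 ST SC SCc; rewrite !properEneq !subsetIl !andbT.
have [CS0|_] /= := eqVneq (C :&: S) set0.
  suff -> : ~: C :&: S = S by rewrite S0.
  by apply/setIidPr; rewrite -disjoints_subset -setI_eq0 setIC CS0.
have [/setIidPl CS|//] /= := eqVneq (C :&: S) C.
apply/andP; split.
- rewrite setIC -setDE setD_eq0; apply: (contraNN _ SC) => SC'.
  by rewrite eqEsubset SC'.
- apply: (contraNN _ ST) => /eqP/setIidPl CcS.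
  by rewrite eqEsubset subsetT -(setUCr C) subUset CS.
Qed.

Lemma purity_on_bounds (R : realType) n (Q S : {set 'I_n}) (phi : conf n -> R[i]) :
  pure_state Q phi -> 0 <= purity_on S phi <= 1.
Proof.
case=> phiQ phi1; rewrite (purity_on_bipart S phiQ) purity_ge0.
exact: purity_le1 (bipart_coef_normed S phiQ phi1).
Qed.

Section ProductState.
Variables (R : realType) (n : nat) (C : {set 'I_n}) (a b : conf n -> R[i]).
Hypotheses (a_pure : pure_state C a) (b_pure : pure_state (~: C) b).
Let psi := tens C (~: C) a b.

Lemma tens_pure_state : pure_state [set: 'I_n] psi.
Proof.
case: a_pure b_pure => aC a1 [bC b1]; split=> [x|]; first by rewrite restrT eqxx.
have CC : [disjoint C & ~: C] by rewrite disjoints_subset setCK.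
rewrite -(mulr1 1) -{1}a1 -b1 !dotp_normsq (sum_setC_union C).
rewrite (big_supp (P := supp C) (F := fun s => `|a s| ^+ 2)) => [|s /aC ->];
  last by rewrite normr0 expr0n.
rewrite big_distrl /=; apply: eq_bigr => s sC.
rewrite (big_supp (P := supp (~: C)) (F := fun t => `|b t| ^+ 2)) => [|t /bC ->];
  last by rewrite normr0 expr0n.
rewrite big_distrr /=; apply: eq_bigr => t tC.
by rewrite /psi tens_setCE; have [-> ->] := restr_union CC sC tC; rewrite normrM exprMn.
Qed.

Lemma purity_on_tens_side S : S = C \/ S = ~: C -> purity_on S psi = 1.
Proof.
case: a_pure b_pure => aC a1 [bC b1].
have CC : [disjoint C & ~: C] by rewrite disjoints_subset setCK.
have CcC : [disjoint ~: C & C] by rewrite disjoint_sym.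
rewrite purity_on_tens // => -[]->.
- by rewrite (purity_on_trivial aC (or_introl (subxx _)))
    (purity_on_trivial bC (or_intror CcC)) a1 b1 expr1n mulr1.
- by rewrite (purity_on_trivial aC (or_intror CC))
    (purity_on_trivial bC (or_introl (subxx _))) a1 b1 expr1n mulr1.
Qed.

Lemma purity_on_tens_far S (eps : R) :
  far_from_mp C eps a -> far_from_mp (~: C) eps b ->
  S != set0 -> S != [set: 'I_n] -> S != C -> S != ~: C ->
  purity_on S psi <= ((1 - eps ^+ 2)%:C)%C.
Proof.
move=> a_far b_far S0 ST SC SCc; case: a_pure b_pure => aC a1 [bC b1].
rewrite purity_on_tens //.
have /andP[pa_ge0 pa_le1] := purity_on_bounds S a_pure.
have /andP[pb_ge0 pb_le1] := purity_on_bounds S b_pure.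
case/orP: (proper_trace_cases S0 ST SC SCc) => /andP[D0 DQ].
- exact: le_trans (ler_piMr pa_ge0 pb_le1) (purity_on_far aC a1 D0 DQ a_far).
- exact: le_trans (ler_piMl pb_ge0 pa_le1) (purity_on_far bC b1 D0 DQ b_far).
Qed.

End ProductState.

Section CopyPairs.
Variables n m : nat.

Definition copy_pair (y : copies n (m + m)) (j : 'I_m) : conf n * conf n :=
  (y (lshift m j), y (rshift m j)).

Definition unpair (f : {ffun 'I_m -> conf n * conf n}) : copies n (m + m) :=
  [ffun i => match split i with inl j => (f j).1 | inr j => (f j).2 end].

Lemma copy_pair_unpair f j : copy_pair (unpair f) j = f j.
Proof.
have e1 : split (lshift m j) = inl j := unsplitK (inl _ j).
have e2 : split (rshift m j) = inr j := unsplitK (inr _ j).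
by rewrite /copy_pair /unpair !ffunE e1 e2; case: (f j).
Qed.

Lemma unpair_copy_pair y : unpair [ffun j => copy_pair y j] = y.
Proof.
apply/ffunP => i; rewrite ffunE.
by case: splitP => j e; rewrite ffunE /copy_pair /=; congr (y _); apply: val_inj.
Qed.

Lemma sum_prod_copy_pair (K : comNzRingType)
    (F : 'I_m -> conf n * conf n -> K) :
  \sum_(y : copies n (m + m)) \prod_j F j (copy_pair y j) =
  \prod_j \sum_p F j p.
Proof.
rewrite bigA_distr_bigA (reindex unpair) /=; last first.
  exists (fun y => [ffun j => copy_pair y j]) => [f _|y _]; last exact: unpair_copy_pair.
  by apply/ffunP => j; rewrite ffunE copy_pair_unpair.
by apply: eq_bigr => f _; apply: eq_bigr => j _; rewrite copy_pair_unpair.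
Qed.

End CopyPairs.

Lemma sum_delta (T : finType) (K : nzSemiRingType) (a : T) (F : T -> K) :
  \sum_x (a == x)%:R * F x = F a.
Proof.
rewrite (bigD1 a) //= eqxx mul1r big1 ?addr0 // => x xa.
by rewrite eq_sym (negbTE xa) mul0r.
Qed.

Section SwapTest.
Variables (R : realType) (n : nat) (S : {set 'I_n}).
Implicit Types p q r : conf n * conf n.

Definition swap_pair p := (splice S p.1 p.2, splice S p.2 p.1).

Lemma swap_pairK : involutive swap_pair.
Proof. by case=> u v; rewrite /swap_pair /= !spliceK. Qed.

Lemma swap_pair_eq p r : (swap_pair p == r) = (swap_pair r == p).
Proof. by rewrite (can2_eq swap_pairK swap_pairK) eq_sym. Qed.

(* The kernel of (1 + SWAP_S) / 2 on one pair of copies. *)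
Definition swap_test p r : R[i] := ((p == r)%:R + (swap_pair p == r)%:R) / 2.

Lemma swap_test_apply p (f : conf n * conf n -> R[i]) :
  \sum_r swap_test p r * f r = (f p + f (swap_pair p)) / 2.
Proof.
rewrite (eq_bigr (fun r => ((p == r)%:R * f r + (swap_pair p == r)%:R * f r) / 2)).
  by rewrite -mulr_suml big_split /= !sum_delta.
by move=> r _; rewrite /swap_test; ring.
Qed.

Lemma swap_test_sym p r : swap_test p r = swap_test r p.
Proof. by rewrite /swap_test eq_sym swap_pair_eq. Qed.

Lemma swap_test_swap p r : swap_test (swap_pair p) r = swap_test p r.
Proof. by rewrite /swap_test swap_pairK addrC. Qed.

Lemma swap_test_conj p r : (swap_test p r)^* = swap_test p r.
Proof. by rewrite /swap_test fmorph_div rmorphD /= !rmorph_nat. Qed.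

Lemma swap_test_idem p r : \sum_q swap_test p q * swap_test q r = swap_test p r.
Proof.
rewrite (eq_bigr (fun q => swap_test p q * swap_test r q)); last first.
  by move=> q _; rewrite (swap_test_sym q).
by rewrite swap_test_apply !(swap_test_sym r) swap_test_swap; field.
Qed.

Definition swap_tests m : operator R n (m + m) :=
  fun y z => \prod_(j < m) swap_test (copy_pair y j) (copy_pair z j).

Lemma swap_tests_projector m : projector (@swap_tests m).
Proof.
split=> [y z|y w]; rewrite /swap_tests.
  by rewrite rmorph_prod; apply: eq_bigr => j _; rewrite /= swap_test_conj swap_test_sym.
under eq_bigr do rewrite -big_split /=.
rewrite (sum_prod_copy_pair
  (fun j q => swap_test (copy_pair y j) q * swap_test q (copy_pair w j))).
by apply: eq_bigr => j _; rewrite swap_test_idem.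
Qed.

End SwapTest.

Section Outcome.
Variables (R : realType) (n m : nat) (S : {set 'I_n}) (psi : conf n -> R[i]).
Hypothesis psi1 : dotp psi psi = 1.

Definition pair_amp (p : conf n * conf n) := psi p.1 * psi p.2.

Lemma tensor_power_copy_pair y :
  @tensor_power R n (m + m) psi y = \prod_(j < m) pair_amp (copy_pair y j).
Proof. by rewrite /tensor_power big_split_ord /= -big_split. Qed.

Lemma swap_test_accept :
  \sum_p \sum_r (pair_amp p)^* * swap_test R S p r * pair_amp r =
  (1 + purity_on S psi) / 2.
Proof.
transitivity (\sum_p ((pair_amp p)^* * pair_amp p +
                      (pair_amp p)^* * pair_amp (swap_pair S p)) / 2).
  apply: eq_bigr => p _; under eq_bigr do rewrite -mulrA.
  by rewrite -mulr_sumr swap_test_apply; ring.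
rewrite -mulr_suml big_split /=; congr ((_ + _) / 2).
- rewrite -(pair_bigA _ (fun u v => (pair_amp (u, v))^* * pair_amp (u, v))) /=.
  rewrite -[1]mulr1 -{1}psi1 -psi1 /dotp big_distrlr /=.
  by apply: eq_bigr => u _; apply: eq_bigr => v _; rewrite /pair_amp rmorphM /=; ring.
- rewrite -(pair_bigA _ (fun u v =>
    (pair_amp (u, v))^* * pair_amp (swap_pair S (u, v)))) /=.
  by apply: eq_bigr => u _; apply: eq_bigr => v _; rewrite /pair_amp rmorphM /=; ring.
Qed.

Lemma outcome_swap_tests :
  outcome_prob (swap_tests R S (m := m)) (@tensor_power R n (m + m) psi) =
  ((1 + purity_on S psi) / 2) ^+ m.
Proof.
rewrite /outcome_prob.
under eq_bigr => y _ do under eq_bigr => z _ do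
  rewrite !tensor_power_copy_pair rmorph_prod /swap_tests -!big_split /=.
under eq_bigr => y _ do rewrite (sum_prod_copy_pair (fun j r =>
  (pair_amp (copy_pair y j))^* * swap_test R S (copy_pair y j) r * pair_amp r)).
rewrite (sum_prod_copy_pair (fun j p =>
  \sum_r (pair_amp p)^* * swap_test R S p r * pair_amp r)).
by rewrite swap_test_accept prodr_const card_ord.
Qed.

End Outcome.

Lemma half_add1_expn_le_expR (R : realType) (m : nat) (eps : R) (q : R[i]) :
  0 <= q -> q <= ((1 - eps ^+ 2)%:C)%C ->
  ((1 + q) / 2) ^+ m <= ((expR (- (eps ^+ 2 * m%:R / 2)))%:C)%C.
Proof.
move=> q_ge0 q_le.
have le_half : (1 + q) / 2 <= ((1 - eps ^+ 2 / 2)%:C)%C.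
  have -> : ((1 - eps ^+ 2 / 2)%:C)%C = (1 + ((1 - eps ^+ 2)%:C)%C) / 2.
    rewrite -(rmorph1 (real_complex R)) -rmorphD /=.
    rewrite -[2 : R[i]](rmorph_nat (real_complex R)) -fmorph_div /=.
    by congr (_%:C)%C; field.
  by rewrite ler_pM2r ?invr_gt0 ?ltr0n // lerD2l.
have half_ge0 : 0 <= ((1 - eps ^+ 2 / 2)%:C)%C.
  by apply: le_trans le_half; rewrite divr_ge0 ?addr_ge0 ?ler0n.
apply: le_trans (lerXn2r m _ _ le_half) _; rewrite ?nnegrE ?divr_ge0 ?addr_ge0 //.
rewrite -rmorphXn lecR.
have -> : - (eps ^+ 2 * m%:R / 2) = - (eps ^+ 2 / 2) * m%:R by field.
rewrite expRM_natr; apply: lerXn2r; rewrite ?nnegrE ?expR_ge0 ?expR_ge1Dx //.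
by rewrite -lecR.
Qed.

Theorem proposition2p19 (R : realType) (n m : nat) (S : {set 'I_n}) :
  (0 < m)%N -> S != set0 -> S != [set: 'I_n] ->
  exists P : operator R n (2 * m)%N,
    projector P /\
    forall (C : {set 'I_n}) (eps : R) (a b : conf n -> R[i]),
      C != set0 -> C != [set: 'I_n] ->
      pure_state C a -> pure_state (~: C) b ->
      far_from_mp C eps a -> far_from_mp (~: C) eps b ->
      let psi := tens C (~: C) a b in
      let p := outcome_prob P (@tensor_power R n (2 * m)%N psi) in
      ((S = C \/ S = ~: C) -> p = 1) /\
      (S <> C -> S <> ~: C -> p <= ((expR (- (eps ^+ 2 * m%:R / 2)))%:C)%C).
Proof.
move=> _ S0 ST; rewrite mul2n -addnn.
exists (swap_tests R S (m := m)); split; first exact: swap_tests_projector.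
move=> C eps a b _ _ a_pure b_pure a_far b_far psi p.
have [_ psi1] := tens_pure_state a_pure b_pure.
have -> : p = ((1 + purity_on S psi) / 2) ^+ m by exact: outcome_swap_tests.
split=> [S_side|/eqP SC /eqP SCc].
  by rewrite purity_on_tens_side // -mulr2n divff ?pnatr_eq0 // expr1n.
apply: half_add1_expn_le_expR.
  by case/andP: (purity_on_bounds S (tens_pure_state a_pure b_pure)).
exact: purity_on_tens_far.
Qed.
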